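(* Let $N\ge 2$ and let $p$ be a star path of length $N$ with edge matrix $E$. Every line of reflective symmetry of the shape of $p$ is one of the candidate lines listed below, so the order of reflective symmetry satisfies $0\le O_{ref}\le N$. The candidate lines are: for $N$ even, the $N/2$ lines through a pair of opposite nodes $j$ and $j+N/2$ ($0\le j<N/2$) and the $N/2$ lines passing between the adjacent nodes $j,j+1$ and between the opposite adjacent nodes $j+N/2,\,j+N/2+1$ ($0\le j<N/2$); for $N$ odd, the $N$ lines each passing through exactly one node $j$ (and between the two nodes opposite to it). Moreover, a candidate line is a line of reflective symmetry if and only if: (i) $e_{1n}=-e_{2n}$ for each node $n$ intersected by the line, and (ii) the remaining columns form a negated palindrome with respect to the line, meaning that for every node $n$ not on the line, column $n'$ of $E$ equals the column obtained by negating both entries of column $n$ and re-sorting them in nondecreasing order, where $n'$ is the mirror image of $n$ across the line (i.e. $n'=(c-n)\bmod N$ with $c=2j$ for a line through node $j$ and $c=2j+1$ for a line between nodes $j$ and $j+1$).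
   Context: A path of length $N$ is a vector $p=(p_0,\dots,p_{N-1})$ whose entries are the integers $0,\dots,N-1$ in some order; indices are cyclic, $p_N=p_0$, $s_{-1}=s_{N-1}$; $x\bmod N$ denotes the remainder in $\{0,\dots,N-1\}$. Nodes $0,\dots,N-1$ are placed at equally spaced points clockwise around a circle; the shape of $p$ is the set of chords joining node $p_n$ to node $p_{n+1}$. A line of reflective symmetry is a line through the center of the circle such that reflection across it maps the shape onto itself; $O_{ref}$ is the number of such lines. The path differences are $d_n=p_{n+1}-p_n$, and the steps are $s_n=d_n$ if $|d_n|<N/2$; $s_n=N/2$ if $|d_n|=N/2$; $s_n=d_n-N$ if $d_n>N/2$; $s_n=d_n+N$ if $d_n<-N/2$. $p$ is a star path if $|s_n|\neq1$ for all $n$. The edge matrix $E=(e_{in})\in\mathbb{Z}^{2\times N}$: for node $n$ let $k$ be the index with $p_k=n$; take $s_k$ and $-s_{k-1}$, replace each by $0$ if its absolute value equals $N/2$, and let $e_{1n}\le e_{2n}$ be these two integers sorted in nondecreasing order. *)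

From Stdlib Require Import Reals Lra Lia ZArith Arith List.
Open Scope R_scope.

(* A path of length N: p : nat -> nat, whose first N values p 0,...,p (N-1)
   are the integers 0..N-1 in some order. Indices are taken cyclically via mod N. *)
Definition is_path (N : nat) (p : nat -> nat) : Prop :=
  (forall n, (n < N)%nat -> (p n < N)%nat) /\
  (forall m n, (m < N)%nat -> (n < N)%nat -> p m = p n -> m = n).

Definition nxt (N n : nat) : nat := ((n + 1) mod N)%nat.
Definition prv (N n : nat) : nat := ((n + N - 1) mod N)%nat.

Definition pdiff (N : nat) (p : nat -> nat) (n : nat) : Z :=
  (Z.of_nat (p (nxt N n)) - Z.of_nat (p n))%Z.

Definition step (N : nat) (p : nat -> nat) (n : nat) : Z :=
  let d := pdiff N p n in
  let NZ := Z.of_nat N in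
  if (2 * Z.abs d <? NZ)%Z then d
  else if (2 * Z.abs d =? NZ)%Z then (NZ / 2)%Z
  else if (d >? 0)%Z then (d - NZ)%Z
  else (d + NZ)%Z.

Definition star_path (N : nat) (p : nat -> nat) : Prop :=
  forall n, (n < N)%nat -> Z.abs (step N p n) <> 1%Z.

Definition pinv (N : nat) (p : nat -> nat) (m : nat) : nat :=
  match find (fun k => Nat.eqb (p k) m) (seq 0 N) with
  | Some k => k
  | None => 0%nat
  end.

Definition zero_half (N : nat) (x : Z) : Z :=
  if (2 * Z.abs x =? Z.of_nat N)%Z then 0%Z else x.

Definition edge_col (N : nat) (p : nat -> nat) (n : nat) : Z * Z :=
  let k := pinv N p n in
  let a := zero_half N (step N p k) in
  let b := zero_half N (- step N p (prv N k))%Z in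
  (Z.min a b, Z.max a b).

Definition e1 (N : nat) (p : nat -> nat) (n : nat) : Z := fst (edge_col N p n).
Definition e2 (N : nat) (p : nat -> nat) (n : nat) : Z := snd (edge_col N p n).

Definition neg_sort (c : Z * Z) : Z * Z :=
  (Z.min (- fst c) (- snd c), Z.max (- fst c) (- snd c))%Z.

Definition pt := (R * R)%type.

Definition node (N k : nat) : pt :=
  (cos (- (2 * PI * INR k / INR N)), sin (- (2 * PI * INR k / INR N))).

Definition chord (a b : pt) : pt -> Prop :=
  fun q => exists t, 0 <= t <= 1 /\
    q = ((1 - t) * fst a + t * fst b, (1 - t) * snd a + t * snd b).

Definition shape (N : nat) (p : nat -> nat) : (pt -> Prop) -> Prop :=
  fun C => exists n, (n < N)%nat /\ C = chord (node N (p n)) (node N (p (nxt N n))).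

Definition refl (th : R) (q : pt) : pt :=
  (cos (2 * th) * fst q + sin (2 * th) * snd q,
   sin (2 * th) * fst q - cos (2 * th) * snd q).

Definition refl_set (th : R) (C : pt -> Prop) : pt -> Prop :=
  fun q => exists x, C x /\ q = refl th x.

Definition sym_line (N : nat) (p : nat -> nat) (th : R) : Prop :=
  forall C, shape N p C <-> exists C', shape N p C' /\ C = refl_set th C'.

Definition same_line (th1 th2 : R) : Prop := exists k : Z, th1 = th2 + IZR k * PI.

Inductive cand : Type :=
  | Through (j : nat)
  | Between (j : nat).  (* line between nodes j and j+1 *)

Definition valid_cand (N : nat) (c : cand) : Prop :=
  match c with
  | Through j => if Nat.even N then (j < N / 2)%nat else (j < N)%nat
  | Between j => Nat.even N = true /\ (j < N / 2)%nat
  end.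

Definition cand_angle (N : nat) (c : cand) : R :=
  match c with
  | Through j => - (2 * PI * INR j / INR N)
  | Between j => - (PI * (2 * INR j + 1) / INR N)
  end.

Definition cand_const (c : cand) : Z :=
  match c with
  | Through j => (2 * Z.of_nat j)%Z
  | Between j => (2 * Z.of_nat j + 1)%Z
  end.

Definition mirror (N : nat) (c : cand) (n : nat) : nat :=
  Z.to_nat ((cand_const c - Z.of_nat n) mod Z.of_nat N)%Z.

Definition on_line (N : nat) (c : cand) (n : nat) : Prop :=
  match c with
  | Through j => n = j \/ (Nat.even N = true /\ n = (j + N / 2)%nat)
  | Between _ => False
  end.

Definition cond_i (N : nat) (p : nat -> nat) (c : cand) : Prop :=
  forall n, (n < N)%nat -> on_line N c n -> e1 N p n = (- e2 N p n)%Z.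

Definition cond_ii (N : nat) (p : nat -> nat) (c : cand) : Prop :=
  forall n, (n < N)%nat -> ~ on_line N c n ->
    edge_col N p (mirror N c n) = neg_sort (edge_col N p n).

Definition distinct_lines (l : list R) : Prop :=
  forall i j, (i < length l)%nat -> (j < length l)%nat -> i <> j ->
    ~ same_line (nth i l 0) (nth j l 0).

From Stdlib Require Import Reals ZArith Arith List Lra Lia.
From Stdlib Require Import Classical FunctionalExtensionality PropExtensionality.
Open Scope R_scope.

(* A symmetry line maps chords of the shape to chords of the shape, and a chord meets the circle
   only at its ends, so it maps nodes to nodes.  Reflection in the line at angle th sends node 0
   to the point at angle 2 th, hence 2 th is a multiple of 2 pi / N: the line is a candidate, and
   distinct lines give distinct candidates, of which there are N.

   On nodes, reflection in a candidate line is the involution n |-> (c - n) mod N, so the line is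
   a symmetry iff this involution preserves adjacency along the path.  Column n of E lists the
   signed offsets from n to its two neighbours, which are distinct as N >= 3; a node is
   determined by its offset from n and the involution negates offsets, so adjacency is preserved
   exactly when column n' is column n negated and re-sorted. *)

Ltac destruct_tests := repeat match goal with
 | |- context [ (?a <? ?b)%nat ] => destruct (Nat.ltb_spec a b)
 | |- context [ (?a <=? ?b)%nat ] => destruct (Nat.leb_spec a b)
 | |- context [ (?a =? ?b)%nat ] => destruct (Nat.eqb_spec a b)
 | |- context [ (?a <? ?b)%Z ] => destruct (Z.ltb_spec a b)
 | |- context [ (?a =? ?b)%Z ] => destruct (Z.eqb_spec a b)
 | |- context [ (?a >? ?b)%Z ] => destruct (Z.gtb_spec a b)
 | H : context [ (?a <? ?b)%nat ] |- _ => destruct (Nat.ltb_spec a b)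
 | H : context [ (?a <=? ?b)%nat ] |- _ => destruct (Nat.leb_spec a b)
 | H : context [ (?a =? ?b)%nat ] |- _ => destruct (Nat.eqb_spec a b)
 | H : context [ (?a <? ?b)%Z ] |- _ => destruct (Z.ltb_spec a b)
 | H : context [ (?a =? ?b)%Z ] |- _ => destruct (Z.eqb_spec a b)
 | H : context [ (?a >? ?b)%Z ] |- _ => destruct (Z.gtb_spec a b)
 end.

(** * Cyclic indices and signed offsets *)

Section CyclicIndex.

Variable N : nat.

Lemma nxt_eq n : (n < N)%nat -> nxt N n = if (n + 1 <? N)%nat then (n + 1)%nat else 0%nat.
Proof.
  intros Hn; unfold nxt; destruct_tests; symmetry.
  - apply (Nat.mod_unique _ _ 0); lia.
  - apply (Nat.mod_unique _ _ 1); lia.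
Qed.

Lemma prv_eq n : (n < N)%nat -> prv N n = if (n =? 0)%nat then (N - 1)%nat else (n - 1)%nat.
Proof.
  intros Hn; unfold prv; destruct_tests; symmetry.
  - apply (Nat.mod_unique _ _ 0); lia.
  - apply (Nat.mod_unique _ _ 1); lia.
Qed.

Lemma nxt_lt n : (n < N)%nat -> (nxt N n < N)%nat.
Proof. intros Hn; rewrite nxt_eq by exact Hn; destruct_tests; lia. Qed.

Lemma prv_lt n : (n < N)%nat -> (prv N n < N)%nat.
Proof. intros Hn; rewrite prv_eq by exact Hn; destruct_tests; lia. Qed.

Lemma nxt_prv n : (n < N)%nat -> nxt N (prv N n) = n.
Proof. intros Hn; rewrite nxt_eq, prv_eq by auto using prv_lt; destruct_tests; lia. Qed.

Lemma prv_nxt n : (n < N)%nat -> prv N (nxt N n) = n.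
Proof. intros Hn; rewrite prv_eq, nxt_eq by auto using nxt_lt; destruct_tests; lia. Qed.

Lemma nxt_neq n : (2 <= N)%nat -> (n < N)%nat -> nxt N n <> n.
Proof. intros H2 Hn; rewrite nxt_eq by exact Hn; destruct_tests; lia. Qed.

Lemma prv_neq n : (2 <= N)%nat -> (n < N)%nat -> prv N n <> n.
Proof. intros H2 Hn; rewrite prv_eq by exact Hn; destruct_tests; lia. Qed.

Lemma nxt_neq_prv n : (3 <= N)%nat -> (n < N)%nat -> nxt N n <> prv N n.
Proof. intros H3 Hn; rewrite nxt_eq, prv_eq by exact Hn; destruct_tests; lia. Qed.

End CyclicIndex.

(* Signed offset from node [m] to node [x], in (-N/2, N/2), the antipodal offset counting as 0
   as in [zero_half]. *)
Definition offset (N m x : nat) : Z :=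
  let r := (if (m <=? x)%nat then Z.of_nat x - Z.of_nat m
            else Z.of_nat x + Z.of_nat N - Z.of_nat m)%Z in
  if (2 * r <? Z.of_nat N)%Z then r
  else if (2 * r =? Z.of_nat N)%Z then 0%Z else (r - Z.of_nat N)%Z.

Section Offset.

Variable N : nat.

Lemma zero_half_opp s : zero_half N (- s) = (- zero_half N s)%Z.
Proof. unfold zero_half; destruct_tests; lia. Qed.

Lemma zero_half_step p n : (2 <= N)%nat -> (p n < N)%nat -> (p (nxt N n) < N)%nat ->
  zero_half N (step N p n) = offset N (p n) (p (nxt N n)).
Proof.
  intros; unfold zero_half, step, pdiff, offset; destruct_tests; Z.div_mod_to_equations; lia.
Qed.

Lemma offset_antisym m x : (m < N)%nat -> (x < N)%nat -> offset N x m = (- offset N m x)%Z.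
Proof. intros; unfold offset; destruct_tests; lia. Qed.

Lemma offset_inj m x y : (m < N)%nat -> (x < N)%nat -> (y < N)%nat -> x <> m -> y <> m ->
  offset N m x = offset N m y -> x = y.
Proof. unfold offset; intros; destruct_tests; lia. Qed.

End Offset.

(** * Mirror images of nodes *)

Lemma half_spec N : N = (2 * (N / 2) + N mod 2)%nat /\ (N mod 2 < 2)%nat.
Proof. split; [apply Nat.div_mod_eq | apply Nat.mod_upper_bound; lia]. Qed.

Lemma even_half N : Nat.even N = true -> N = (2 * (N / 2))%nat.
Proof.
  intros HE; apply Nat.even_spec in HE as [h ->].
  rewrite Nat.mul_comm, Nat.div_mul; lia.
Qed.

Section Mirror.

Variables (N : nat) (c : cand).
Hypotheses (HN : (0 < N)%nat) (Hc : valid_cand N c).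

Lemma cand_const_bounds : (0 <= cand_const c < 2 * Z.of_nat N)%Z.
Proof.
  pose proof (half_spec N).
  destruct c; unfold valid_cand, cand_const in *; [destruct (Nat.even N) | destruct Hc]; lia.
Qed.

Lemma mirror_spec x : (x < N)%nat ->
  (mirror N c x < N)%nat /\
  (Z.of_nat (mirror N c x) = cand_const c - Z.of_nat x + Z.of_nat N \/
   Z.of_nat (mirror N c x) = cand_const c - Z.of_nat x \/
   Z.of_nat (mirror N c x) = cand_const c - Z.of_nat x - Z.of_nat N)%Z.
Proof.
  intros Hx; pose proof cand_const_bounds.
  assert (Hr := Z.mod_pos_bound (cand_const c - Z.of_nat x) (Z.of_nat N) ltac:(lia)).
  unfold mirror; rewrite Z2Nat.id by lia; split; [lia |].
  set (d := (cand_const c - Z.of_nat x)%Z) in *.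
  destruct (Z_lt_le_dec d 0);
    [left | destruct (Z_lt_le_dec d (Z.of_nat N)); [right; left | right; right]]; symmetry.
  - apply (Z.mod_unique _ _ (-1)); lia.
  - apply (Z.mod_unique _ _ 0); lia.
  - apply (Z.mod_unique _ _ 1); lia.
Qed.

Lemma mirror_lt x : (x < N)%nat -> (mirror N c x < N)%nat.
Proof. intros Hx; apply (mirror_spec x Hx). Qed.

Lemma mirror_involutive x : (x < N)%nat -> mirror N c (mirror N c x) = x.
Proof.
  intros Hx; destruct (mirror_spec x Hx) as [Hm Ex].
  destruct (mirror_spec _ Hm) as [Hmm Emx]; lia.
Qed.

Lemma mirror_inj x y : (x < N)%nat -> (y < N)%nat -> mirror N c x = mirror N c y -> x = y.
Proof.
  intros Hx Hy E; destruct (mirror_spec x Hx) as [_ Ex], (mirror_spec y Hy) as [_ Ey]; lia.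
Qed.

Lemma offset_mirror m x : (m < N)%nat -> (x < N)%nat ->
  offset N (mirror N c m) (mirror N c x) = offset N x m.
Proof.
  intros Hm Hx; destruct (mirror_spec x Hx) as [Hx2 Ex], (mirror_spec m Hm) as [Hm2 Em].
  unfold offset; destruct_tests; lia.
Qed.

Lemma mirror_on_line n : (n < N)%nat -> on_line N c n -> mirror N c n = n.
Proof.
  intros Hn Hl; destruct (mirror_spec n Hn) as [Hmn En].
  destruct c as [j | j]; [| contradiction]; unfold valid_cand, on_line, cand_const in *.
  destruct Hl as [-> | [HE ->]]; [lia |].
  rewrite HE in Hc; pose proof (even_half N HE); lia.
Qed.

End Mirror.

(** * Neighbours along the path and the edge matrix *)

Definition path_adj (N : nat) (p : nat -> nat) (u v : nat) : Prop :=
  exists n, (n < N)%nat /\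
    ((p n = u /\ p (nxt N n) = v) \/ (p n = v /\ p (nxt N n) = u)).

Definition next_nbr (N : nat) (p : nat -> nat) (m : nat) : nat := p (nxt N (pinv N p m)).
Definition prev_nbr (N : nat) (p : nat -> nat) (m : nat) : nat := p (prv N (pinv N p m)).

Definition sort2 (a b : Z) : Z * Z := (Z.min a b, Z.max a b).

Lemma sort2_eq_iff a b a' b' :
  sort2 a b = sort2 a' b' <-> (a = a' /\ b = b') \/ (a = b' /\ b = a').
Proof.
  unfold sort2; split.
  - intros E; injection E; lia.
  - intros [[-> ->] | [-> ->]]; f_equal; lia.
Qed.

Lemma neg_sort_sort2 a b : neg_sort (sort2 a b) = sort2 (- a) (- b).
Proof. unfold neg_sort, sort2; simpl; f_equal; lia. Qed.

Lemma sort2_eq_neg_sort_iff a b :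
  sort2 a b = neg_sort (sort2 a b) <-> fst (sort2 a b) = (- snd (sort2 a b))%Z.
Proof.
  unfold neg_sort, sort2; simpl; split.
  - intros E; injection E; lia.
  - intros E; f_equal; lia.
Qed.

Section Path.

Variables (N : nat) (p : nat -> nat).
Hypotheses (H2 : (2 <= N)%nat) (HP : is_path N p).

Lemma path_onto m : (m < N)%nat -> exists k, (k < N)%nat /\ p k = m.
Proof.
  destruct HP as [Hr Hi]; intros Hm.
  assert (Hincl : incl (seq 0 N) (map p (seq 0 N))).
  { apply NoDup_length_incl.
    - apply NoDup_map_NoDup_ForallPairs; [| apply seq_NoDup].
      intros x y Hx Hy; apply in_seq in Hx, Hy; apply Hi; lia.
    - rewrite length_map; lia.
    - intros y Hy; apply in_map_iff in Hy as [x [<- Hx]]; apply in_seq in Hx.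
      apply in_seq; specialize (Hr x); lia. }
  assert (Hm' : In m (seq 0 N)) by (apply in_seq; lia).
  apply Hincl, in_map_iff in Hm' as [k [Hk Hin]]; apply in_seq in Hin.
  exists k; split; [lia | exact Hk].
Qed.

Lemma pinv_spec m : (m < N)%nat -> (pinv N p m < N)%nat /\ p (pinv N p m) = m.
Proof.
  intros Hm; unfold pinv; destruct (find _ _) as [k |] eqn:E.
  - apply find_some in E as [Hin Heq]; apply in_seq in Hin; apply Nat.eqb_eq in Heq.
    split; [lia | exact Heq].
  - exfalso; destruct (path_onto m Hm) as [k [Hk Hpk]].
    apply (Nat.eqb_neq (p k) m); [| exact Hpk].
    apply (find_none _ _ E); apply in_seq; lia.
Qed.

Lemma path_adj_sym u v : path_adj N p u v -> path_adj N p v u.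
Proof. intros [n [Hn H]]; exists n; split; [exact Hn | tauto]. Qed.

Lemma path_adj_bounds u v : path_adj N p u v -> (u < N)%nat /\ (v < N)%nat /\ u <> v.
Proof.
  destruct HP as [Hr Hi]; intros [n [Hn H]].
  assert (Hn' := nxt_lt N n Hn).
  assert (Hne : p n <> p (nxt N n)) by (intros E; apply Hi in E; auto; apply (nxt_neq N n); auto).
  specialize (Hr n Hn) as Hrn; specialize (Hr _ Hn') as Hrn'.
  destruct H as [[<- <-] | [<- <-]]; auto.
Qed.

Lemma path_adj_iff m x : (m < N)%nat ->
  path_adj N p m x <-> x = next_nbr N p m \/ x = prev_nbr N p m.
Proof.
  intros Hm; destruct (pinv_spec m Hm) as [Hk Hpk]; unfold next_nbr, prev_nbr.
  set (k := pinv N p m) in *; destruct HP as [Hr Hi]; split.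
  - intros [n [Hn [[E1 E2] | [E1 E2]]]].
    + left; rewrite <- Hpk in E1; apply Hi in E1; auto; subst n; auto.
    + right; rewrite <- Hpk in E2; apply Hi in E2; auto using nxt_lt.
      rewrite <- E2, prv_nxt; auto.
  - intros [-> | ->].
    + exists k; auto.
    + exists (prv N k); split; [apply prv_lt; auto |].
      right; rewrite nxt_prv; auto.
Qed.

Lemma edge_col_nbrs m : (m < N)%nat ->
  edge_col N p m = sort2 (offset N m (next_nbr N p m)) (offset N m (prev_nbr N p m)).
Proof.
  intros Hm; destruct (pinv_spec m Hm) as [Hk Hpk]; pose proof HP as [Hr _].
  unfold edge_col, next_nbr, prev_nbr; set (k := pinv N p m) in *.
  rewrite zero_half_step, zero_half_opp, zero_half_step, nxt_prv, Hpk; auto using nxt_lt, prv_lt.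
  rewrite (offset_antisym N m), Z.opp_involutive; auto using prv_lt.
Qed.

Lemma nbrs_distinct m : (3 <= N)%nat -> (m < N)%nat ->
  (next_nbr N p m < N)%nat /\ (prev_nbr N p m < N)%nat /\
  next_nbr N p m <> prev_nbr N p m /\ next_nbr N p m <> m /\ prev_nbr N p m <> m.
Proof.
  intros H3 Hm; destruct (pinv_spec m Hm) as [Hk Hpk].
  unfold next_nbr, prev_nbr; set (k := pinv N p m) in *; destruct HP as [Hr Hi].
  pose proof (nxt_lt N k Hk); pose proof (prv_lt N k Hk).
  pose proof (nxt_neq N k H2 Hk); pose proof (prv_neq N k H2 Hk).
  pose proof (nxt_neq_prv N k H3 Hk).
  repeat split; auto; intros E; try rewrite <- Hpk in E; apply Hi in E; auto.
Qed.

End Path.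

Definition mirror_preserves_adj (N : nat) (p : nat -> nat) (c : cand) : Prop :=
  forall u v, path_adj N p u v -> path_adj N p (mirror N c u) (mirror N c v).

Section Characterisation.

Variables (N : nat) (p : nat -> nat) (c : cand).
Hypotheses (H3 : (3 <= N)%nat) (HP : is_path N p) (Hc : valid_cand N c).

Let HN : (0 < N)%nat. Proof. lia. Qed.
Let H2 : (2 <= N)%nat. Proof. lia. Qed.

Lemma mirrored_nbrs_iff_column n : (n < N)%nat ->
  (path_adj N p (mirror N c n) (mirror N c (next_nbr N p n)) /\
   path_adj N p (mirror N c n) (mirror N c (prev_nbr N p n))) <->
  edge_col N p (mirror N c n) = neg_sort (edge_col N p n).
Proof.
  intros Hn; assert (Hm := mirror_lt N c HN Hc n Hn).
  destruct (nbrs_distinct N p H2 HP n H3 Hn) as [Ha [Hb [Hab [Han Hbn]]]].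
  destruct (nbrs_distinct N p H2 HP _ H3 Hm) as [Ha' [Hb' [Hab' [Han' Hbn']]]].
  rewrite (edge_col_nbrs N p H2 HP n), (edge_col_nbrs N p H2 HP (mirror N c n)), neg_sort_sort2
    by auto.
  rewrite !(path_adj_iff N p H2 HP _ _ Hm).
  set (a := next_nbr N p n) in *; set (b := prev_nbr N p n) in *.
  set (a' := next_nbr N p (mirror N c n)) in *; set (b' := prev_nbr N p (mirror N c n)) in *.
  rewrite <- !(offset_antisym N n), <- (offset_mirror N c HN Hc n a),
    <- (offset_mirror N c HN Hc n b) by auto.
  assert (Hma := mirror_lt N c HN Hc a Ha); assert (Hmb := mirror_lt N c HN Hc b Hb).
  assert (mirror N c a <> mirror N c n) by (intros E; apply (mirror_inj N c HN Hc) in E; auto).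
  assert (mirror N c b <> mirror N c n) by (intros E; apply (mirror_inj N c HN Hc) in E; auto).
  assert (mirror N c a <> mirror N c b) by (intros E; apply (mirror_inj N c HN Hc) in E; auto).
  assert (Hoff : forall x y, (x < N)%nat -> (y < N)%nat -> x <> mirror N c n -> y <> mirror N c n ->
            offset N (mirror N c n) x = offset N (mirror N c n) y <-> x = y).
  { intros x y Hx Hy Hxn Hyn; split; [apply offset_inj; auto | intros ->; reflexivity]. }
  rewrite sort2_eq_iff, !Hoff by auto.
  intuition congruence.
Qed.

Lemma mirror_preserves_adj_iff_columns :
  mirror_preserves_adj N p c <->
  forall n, (n < N)%nat -> edge_col N p (mirror N c n) = neg_sort (edge_col N p n).
Proof.
  split.
  - intros Hpres n Hn; apply mirrored_nbrs_iff_column; auto.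
    split; apply Hpres, (path_adj_iff N p H2 HP n _ Hn); auto.
  - intros Hcol u v Huv.
    destruct (path_adj_bounds N p H2 HP u v Huv) as [Hu _].
    destruct (proj2 (mirrored_nbrs_iff_column u Hu) (Hcol u Hu)) as [Hnext Hprev].
    apply (path_adj_iff N p H2 HP u v Hu) in Huv as [Ev | Ev]; rewrite Ev; assumption.
Qed.

End Characterisation.

Lemma columns_iff_cond_i_ii N p c : (0 < N)%nat -> valid_cand N c ->
  (forall n, (n < N)%nat -> edge_col N p (mirror N c n) = neg_sort (edge_col N p n)) <->
  cond_i N p c /\ cond_ii N p c.
Proof.
  intros HN Hc; unfold cond_i, cond_ii, e1, e2; split.
  - intros Hcol; split; [intros n Hn Hl | intros n Hn _; auto].
    specialize (Hcol n Hn); rewrite mirror_on_line in Hcol by auto.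
    apply sort2_eq_neg_sort_iff, Hcol.
  - intros [Hi Hii] n Hn; destruct (classic (on_line N c n)) as [Hl | Hl]; auto.
    rewrite mirror_on_line by auto; apply sort2_eq_neg_sort_iff, Hi; auto.
Qed.

(** * Chords, nodes and reflections *)

Lemma sin_cos_2IZR_PI (z : Z) : sin (2 * IZR z * PI) = 0 /\ cos (2 * IZR z * PI) = 1.
Proof.
  split; [apply sin_eq_0_1; exists (2 * z)%Z; rewrite mult_IZR; ring |].
  replace (2 * IZR z * PI) with (2 * (IZR z * PI)) by ring.
  rewrite cos_2a_sin, sin_eq_0_1 by (exists z; reflexivity); ring.
Qed.

Lemma cos_add_2IZR_PI x z : cos (x + 2 * IZR z * PI) = cos x.
Proof. destruct (sin_cos_2IZR_PI z) as [S C]; rewrite cos_plus, S, C; ring. Qed.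

Lemma sin_add_2IZR_PI x z : sin (x + 2 * IZR z * PI) = sin x.
Proof. destruct (sin_cos_2IZR_PI z) as [S C]; rewrite sin_plus, S, C; ring. Qed.

Lemma cos_sin_eq_mod_2PI x y :
  cos x = cos y -> sin x = sin y -> exists z : Z, x = y + 2 * IZR z * PI.
Proof.
  intros Hc Hs.
  assert (C1 : cos (x - y) = 1).
  { rewrite cos_minus, Hc, Hs; pose proof (sin2_cos2 y); unfold Rsqr in *; lra. }
  assert (S0 : sin ((x - y) / 2) = 0).
  { replace (x - y) with (2 * ((x - y) / 2)) in C1 by field.
    rewrite cos_2a_sin in C1; apply Rsqr_0_uniq; unfold Rsqr; lra. }
  apply sin_eq_0_0 in S0 as [k Hk]; exists k; lra.
Qed.

Definition on_circle (q : pt) : Prop := fst q * fst q + snd q * snd q = 1.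

Lemma polar_on_circle phi : on_circle (cos phi, sin phi).
Proof. unfold on_circle; simpl; pose proof (sin2_cos2 phi); unfold Rsqr in *; lra. Qed.

Lemma refl_polar th phi : refl th (cos phi, sin phi) = (cos (2 * th - phi), sin (2 * th - phi)).
Proof. unfold refl; simpl; rewrite cos_minus, sin_minus; f_equal; ring. Qed.

Lemma refl_on_circle th q : on_circle q -> on_circle (refl th q).
Proof.
  destruct q as [x y]; unfold on_circle, refl; simpl; intros H.
  pose proof (sin2_cos2 (2 * th)) as E; unfold Rsqr in E.
  transitivity ((sin (2 * th) * sin (2 * th) + cos (2 * th) * cos (2 * th)) * (x * x + y * y));
    [ring | rewrite E, H; ring].
Qed.

(* Expanding |q|^2 = 1 for q = (1-t)a + tb leaves t(1-t)|a-b|^2 = 0. *)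
Lemma chord_on_circle a b q : on_circle a -> on_circle b -> on_circle q -> chord a b q ->
  q = a \/ q = b.
Proof.
  destruct a as [a1 a2], b as [b1 b2]; unfold on_circle, chord; simpl.
  intros Ha Hb Hq [t [Ht ->]]; simpl in Hq.
  set (q1 := (1 - t) * a1 + t * b1) in Hq; set (q2 := (1 - t) * a2 + t * b2) in Hq.
  assert (E : t * (1 - t) * ((a1 - b1) * (a1 - b1) + (a2 - b2) * (a2 - b2))
              = (1 - (q1 * q1 + q2 * q2)) + (1 - t) * (a1 * a1 + a2 * a2 - 1)
                + t * (b1 * b1 + b2 * b2 - 1)) by (unfold q1, q2; ring).
  rewrite Hq, Ha, Hb, !Rminus_diag, !Rmult_0_r, !Rplus_0_r in E.
  apply Rmult_integral in E as [E | E]; [apply Rmult_integral in E as [E | E] |].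
  - left; subst t; f_equal; ring.
  - right; replace t with 1 by lra; f_equal; ring.
  - apply Rplus_sqr_eq_0 in E as [E1 E2].
    left; f_equal; [replace b1 with a1 by lra | replace b2 with a2 by lra]; ring.
Qed.

Lemma chord_sym a b : chord a b = chord b a.
Proof.
  apply functional_extensionality; intros q; apply propositional_extensionality.
  unfold chord; split; intros [t [Ht ->]]; exists (1 - t); split; try lra; f_equal; ring.
Qed.

Lemma refl_set_chord th a b : refl_set th (chord a b) = chord (refl th a) (refl th b).
Proof.
  apply functional_extensionality; intros q; apply propositional_extensionality.
  unfold refl_set, chord, refl; split.
  - intros [x [[t [Ht ->]] ->]]; exists t; split; [exact Ht | simpl; f_equal; ring].
  - intros [t [Ht ->]]; eexists; split; [exists t; split; [exact Ht | reflexivity] |].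
    simpl; f_equal; ring.
Qed.

Section Nodes.

Variable N : nat.
Hypothesis HN : (0 < N)%nat.

Let HNR : INR N <> 0. Proof. apply not_0_INR; lia. Qed.

Lemma node_on_circle k : on_circle (node N k).
Proof. apply polar_on_circle. Qed.

Lemma node_inj a b : (a < N)%nat -> (b < N)%nat -> node N a = node N b -> a = b.
Proof.
  intros Ha Hb E; unfold node in E; injection E as Ec Es.
  destruct (cos_sin_eq_mod_2PI _ _ Ec Es) as [z Hz].
  assert (Ez : (Z.of_nat b - Z.of_nat a = z * Z.of_nat N)%Z).
  { apply eq_IZR; rewrite minus_IZR, mult_IZR, <- !INR_IZR_INZ.
    apply (Rmult_eq_reg_l (2 * PI / INR N)).
    - replace (2 * PI / INR N * (IZR z * INR N)) with (2 * IZR z * PI) by (field; exact HNR).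
      replace (2 * PI / INR N * (INR b - INR a))
        with (2 * PI * INR b / INR N - 2 * PI * INR a / INR N) by (field; exact HNR).
      lra.
    - unfold Rdiv; apply Rmult_integral_contrapositive_currified;
        [pose proof PI_RGT_0; lra | apply Rinv_neq_0_compat, HNR]. }
  destruct (Z.lt_trichotomy z 0) as [Z1 | [-> | Z1]]; nia.
Qed.

Lemma node_0 : node N 0 = (cos 0, sin 0).
Proof. unfold node; f_equal; f_equal; simpl; field; exact HNR. Qed.

Variable c : cand.
Hypothesis Hc : valid_cand N c.

Lemma refl_node_cand k : (k < N)%nat -> refl (cand_angle N c) (node N k) = node N (mirror N c k).
Proof.
  intros Hk; destruct (mirror_spec N c HN Hc k Hk) as [_ Hm].
  assert (Hq : exists q : Z,
    Z.of_nat (mirror N c k) = (cand_const c - Z.of_nat k + q * Z.of_nat N)%Z).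
  { destruct Hm as [H | [H | H]]; [exists 1%Z | exists 0%Z | exists (-1)%Z]; lia. }
  destruct Hq as [q Hq].
  assert (E : - (2 * PI * INR (mirror N c k) / INR N)
              = 2 * cand_angle N c - - (2 * PI * INR k / INR N) + 2 * IZR (- q) * PI).
  { rewrite (INR_IZR_INZ (mirror N c k)), Hq, plus_IZR, minus_IZR, mult_IZR, opp_IZR,
      <- !INR_IZR_INZ.
    destruct c; unfold cand_angle, cand_const;
      rewrite ?plus_IZR, mult_IZR, <- INR_IZR_INZ; simpl; field; exact HNR. }
  unfold node; rewrite refl_polar, E, cos_add_2IZR_PI, sin_add_2IZR_PI; reflexivity.
Qed.

End Nodes.

Definition node_chord (N u v : nat) : pt -> Prop := chord (node N u) (node N v).

Lemma shape_iff_adj N p C : shape N p C <-> exists u v, path_adj N p u v /\ C = node_chord N u v.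
Proof.
  split.
  - intros [n [Hn ->]]; exists (p n), (p (nxt N n)); split; [exists n | reflexivity]; auto.
  - intros [u [v [[n [Hn [[<- <-] | [<- <-]]]] ->]]]; exists n; split; auto.
    apply chord_sym.
Qed.

Lemma node_chord_ends N u v : node_chord N u v (node N u) /\ node_chord N u v (node N v).
Proof.
  unfold node_chord, chord; split; [exists 0 | exists 1]; (split; [lra |]);
    destruct (node N u), (node N v); simpl; f_equal; ring.
Qed.

Lemma node_on_node_chord N u a b : (0 < N)%nat -> (u < N)%nat -> (a < N)%nat -> (b < N)%nat ->
  node_chord N a b (node N u) -> u = a \/ u = b.
Proof.
  intros HN Hu Ha Hb H.
  apply chord_on_circle in H as [E | E]; try apply node_on_circle;
    apply node_inj in E; auto.
Qed.

Section Symmetry.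

Variables (N : nat) (p : nat -> nat) (c : cand).
Hypotheses (H2 : (2 <= N)%nat) (HP : is_path N p) (Hc : valid_cand N c).

Let HN : (0 < N)%nat. Proof. lia. Qed.

Lemma refl_node_chord u v : (u < N)%nat -> (v < N)%nat ->
  refl_set (cand_angle N c) (node_chord N u v) = node_chord N (mirror N c u) (mirror N c v).
Proof. intros; unfold node_chord; rewrite refl_set_chord, !refl_node_cand; auto. Qed.

Lemma node_chord_adj u v a b : (u < N)%nat -> (v < N)%nat -> u <> v ->
  path_adj N p a b -> node_chord N u v = node_chord N a b -> path_adj N p u v.
Proof.
  intros Hu Hv Hne Hab E.
  destruct (path_adj_bounds N p H2 HP a b Hab) as [Ha [Hb _]].
  destruct (node_chord_ends N u v) as [Eu Ev]; rewrite E in Eu, Ev.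
  apply node_on_node_chord in Eu as [-> | ->], Ev as [-> | ->]; auto using path_adj_sym;
    contradiction.
Qed.

Lemma sym_line_cand_iff : sym_line N p (cand_angle N c) <-> mirror_preserves_adj N p c.
Proof.
  split.
  - intros Hsym u v Huv.
    destruct (path_adj_bounds N p H2 HP u v Huv) as [Hu [Hv Hne]].
    assert (Hsh : shape N p (node_chord N (mirror N c u) (mirror N c v))).
    { apply Hsym; exists (node_chord N u v); split.
      - apply shape_iff_adj; eauto.
      - rewrite refl_node_chord; auto. }
    apply shape_iff_adj in Hsh as [a [b [Hab E]]].
    apply (node_chord_adj _ _ a b); auto using mirror_lt.
    intros E'; apply (mirror_inj N c HN Hc) in E'; auto.
  - intros Hpres C; rewrite shape_iff_adj; split.
    + intros [u [v [Huv ->]]].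
      destruct (path_adj_bounds N p H2 HP u v Huv) as [Hu [Hv _]].
      exists (node_chord N (mirror N c u) (mirror N c v)); split.
      * apply shape_iff_adj; eauto.
      * rewrite refl_node_chord, !mirror_involutive; auto using mirror_lt.
    + intros [C' [Hsh ->]]; apply shape_iff_adj in Hsh as [u [v [Huv ->]]].
      destruct (path_adj_bounds N p H2 HP u v Huv) as [Hu [Hv _]].
      rewrite refl_node_chord by auto; eauto.
Qed.

End Symmetry.

(** * Symmetry lines and their number *)

Lemma same_line_trans a b d : same_line a b -> same_line b d -> same_line a d.
Proof. intros [k1 ->] [k2 ->]; exists (k2 + k1)%Z; rewrite plus_IZR; ring. Qed.

Lemma same_line_sym a b : same_line a b -> same_line b a.
Proof. intros [k ->]; exists (- k)%Z; rewrite opp_IZR; ring. Qed.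

Lemma sym_line_maps_node_0_to_node N p th : (2 <= N)%nat -> is_path N p -> sym_line N p th ->
  exists m, (m < N)%nat /\ refl th (node N 0) = node N m.
Proof.
  intros H2 HP Hsym.
  destruct (path_onto N p H2 HP 0 ltac:(lia)) as [n [Hn Hpn]].
  assert (Hsh : shape N p (refl_set th (node_chord N (p n) (p (nxt N n))))).
  { apply Hsym; eexists; split; [exists n; split; [exact Hn | reflexivity] | reflexivity]. }
  apply shape_iff_adj in Hsh as [a [b [Hab E]]].
  destruct (path_adj_bounds N p H2 HP a b Hab) as [Ha [Hb _]].
  assert (Hon : node_chord N a b (refl th (node N 0))).
  { rewrite <- E; exists (node N 0); split; [rewrite <- Hpn; apply node_chord_ends | reflexivity]. }
  apply chord_on_circle in Hon as [Ea | Eb]; eauto using node_on_circle, refl_on_circle.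
Qed.

Lemma refl_node_0_angle N th m : (0 < N)%nat -> refl th (node N 0) = node N m ->
  same_line th (- (PI * INR m / INR N)).
Proof.
  intros HN E; rewrite node_0, refl_polar in E by exact HN; unfold node in E.
  injection E as Ec Es; destruct (cos_sin_eq_mod_2PI _ _ Ec Es) as [z Hz].
  exists z; apply (Rmult_eq_reg_l 2); [| lra].
  replace (2 * (- (PI * INR m / INR N) + IZR z * PI))
    with (- (2 * PI * INR m / INR N) + 2 * IZR z * PI) by (field; apply not_0_INR; lia).
  lra.
Qed.

Lemma half_node_angle_cand N m : (0 < N)%nat -> (m < N)%nat ->
  exists c, valid_cand N c /\ same_line (- (PI * INR m / INR N)) (cand_angle N c).
Proof.
  intros HN Hm; assert (HNR : INR N <> 0) by (apply not_0_INR; lia).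
  destruct (Nat.Even_or_Odd m) as [[j ->] | [j ->]]; destruct (Nat.even N) eqn:EN.
  - exists (Through j); split.
    + unfold valid_cand; rewrite EN; pose proof (even_half N EN); lia.
    + exists 0%Z; unfold cand_angle; rewrite mult_INR; simpl; field; exact HNR.
  - exists (Through j); split.
    + unfold valid_cand; rewrite EN; lia.
    + exists 0%Z; unfold cand_angle; rewrite mult_INR; simpl; field; exact HNR.
  - exists (Between j); split.
    + split; [exact EN | pose proof (even_half N EN); lia].
    + exists 0%Z; unfold cand_angle; rewrite plus_INR, mult_INR; simpl; field; exact HNR.
  - (* For odd N the line between nodes j and j+1 passes through the node opposite to them. *)
    assert (HO : Nat.Odd N) by (apply Nat.odd_spec; unfold Nat.odd; rewrite EN; reflexivity).
    destruct HO as [h Hh].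
    exists (Through (j + h + 1)); split.
    + unfold valid_cand; rewrite EN; lia.
    + exists 1%Z; unfold cand_angle.
      assert (HNh : INR N = 2 * INR h + 1) by (rewrite Hh, plus_INR, mult_INR; reflexivity).
      rewrite !plus_INR, !mult_INR, HNh; rewrite HNh in HNR; simpl; field; exact HNR.
Qed.

Lemma sym_line_is_cand N p th : (2 <= N)%nat -> is_path N p -> sym_line N p th ->
  exists c, valid_cand N c /\ same_line th (cand_angle N c).
Proof.
  intros H2 HP Hsym.
  destruct (sym_line_maps_node_0_to_node N p th H2 HP Hsym) as [m [Hm E]].
  destruct (half_node_angle_cand N m ltac:(lia) Hm) as [c [Hc Hl]].
  exists c; split; [exact Hc |].
  apply (same_line_trans _ _ _ (refl_node_0_angle N th m ltac:(lia) E) Hl).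
Qed.

Definition cand_index (N : nat) (c : cand) : nat :=
  match c with
  | Through j => j
  | Between j => (N / 2 + j)%nat
  end.

Lemma cand_index_lt N c : valid_cand N c -> (cand_index N c < N)%nat.
Proof.
  pose proof (half_spec N); destruct c as [j | j]; unfold valid_cand, cand_index.
  - destruct (Nat.even N); lia.
  - intros [HE Hj]; pose proof (even_half N HE); lia.
Qed.

Lemma cand_index_inj N c1 c2 : valid_cand N c1 -> valid_cand N c2 ->
  cand_index N c1 = cand_index N c2 -> c1 = c2.
Proof.
  destruct c1 as [j1 | j1], c2 as [j2 | j2]; unfold valid_cand, cand_index; intros H1 H2 E.
  - congruence.
  - destruct H2 as [HE _]; rewrite HE in H1; lia.
  - destruct H1 as [HE _]; rewrite HE in H2; lia.
  - f_equal; lia.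
Qed.

Lemma length_le_of_injective_code (A : Type) (d : A) (code : A -> nat -> Prop) (l : list A)
  (N : nat) :
  (forall x, In x l -> exists k, (k < N)%nat /\ code x k) ->
  (forall i j k, (i < length l)%nat -> (j < length l)%nat ->
     code (nth i l d) k -> code (nth j l d) k -> i = j) ->
  (length l <= N)%nat.
Proof.
  intros Hex Huniq.
  assert (HL : exists L, length L = length l /\ forall i, (i < length l)%nat ->
                 (nth i L 0 < N)%nat /\ code (nth i l d) (nth i L 0)%nat).
  { clear Huniq; induction l as [| x l IH].
    - exists nil; split; [reflexivity | simpl; lia].
    - destruct IH as [L [HL HLc]]; [intros y Hy; apply Hex; right; exact Hy |].
      destruct (Hex x (or_introl eq_refl)) as [k [Hk Hxk]].
      exists (k :: L); split; [simpl; lia |].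
      intros [| i] Hi; simpl; [auto | apply HLc; simpl in Hi; lia]. }
  destruct HL as [L [HL HLc]]; rewrite <- HL, <- (length_seq N 0%nat).
  apply NoDup_incl_length.
  - apply (NoDup_nth L 0%nat); intros i j Hi Hj E; rewrite HL in Hi, Hj.
    apply (Huniq i j (nth i L 0%nat)); auto; [apply HLc | rewrite E; apply HLc]; auto.
  - intros k Hk; apply (In_nth L k 0%nat) in Hk as [i [Hi <-]]; rewrite HL in Hi.
    apply in_seq; pose proof (proj1 (HLc i Hi)); lia.
Qed.

Lemma distinct_cand_lines_length_le N (l : list R) : distinct_lines l ->
  (forall th, In th l -> exists c, valid_cand N c /\ same_line th (cand_angle N c)) ->
  (length l <= N)%nat.
Proof.
  intros Hdist Hcand.
  apply (length_le_of_injective_code R 0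
           (fun th k => exists c,
              valid_cand N c /\ cand_index N c = k /\ same_line th (cand_angle N c))).
  - intros th Hth; destruct (Hcand th Hth) as [c [Hc Hl]].
    exists (cand_index N c); split; eauto using cand_index_lt.
  - intros i j k Hi Hj [ci [Hci [<- Hli]]] [cj [Hcj [Ecj Hlj]]].
    assert (ci = cj) by (apply (cand_index_inj N); auto); subst cj.
    destruct (Nat.eq_dec i j) as [| Hne]; [assumption | exfalso].
    apply (Hdist i j Hi Hj Hne), (same_line_trans _ _ _ Hli), same_line_sym, Hlj.
Qed.

(* This is the only use of the star condition: for N = 2 every step is +-1. *)
Lemma star_path_length_ge_3 N p : (2 <= N)%nat -> is_path N p -> star_path N p -> (3 <= N)%nat.
Proof.
  intros H2 [Hr Hi] Hstar; destruct (Nat.eq_dec N 2) as [-> | ]; [exfalso | lia].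
  specialize (Hstar 0%nat ltac:(lia)); unfold step, pdiff in Hstar.
  replace (nxt 2 0) with 1%nat in Hstar by reflexivity.
  pose proof (Hr 0%nat ltac:(lia)); pose proof (Hr 1%nat ltac:(lia)).
  assert (p 0%nat <> p 1%nat) by (intros E; apply Hi in E; lia).
  destruct_tests; Z.div_mod_to_equations; lia.
Qed.

Theorem mainTheorem7 (N : nat) (p : nat -> nat) :
  (2 <= N)%nat -> is_path N p -> star_path N p ->
  (* every line of reflective symmetry is a candidate line *)
  (forall th, sym_line N p th ->
     exists c, valid_cand N c /\ same_line th (cand_angle N c)) /\
  (* hence O_ref <= N: any family of distinct symmetry lines has at most N members *)
  (forall l : list R, distinct_lines l -> Forall (sym_line N p) l ->
     (length l <= N)%nat) /\
  (* characterisation of the candidate lines that are lines of symmetry *)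
  (forall c, valid_cand N c ->
     (sym_line N p (cand_angle N c) <-> cond_i N p c /\ cond_ii N p c)).
Proof.
  intros H2 HP Hstar; pose proof (star_path_length_ge_3 N p H2 HP Hstar) as H3.
  assert (Hcand := sym_line_is_cand N p).
  split; [| split].
  - auto.
  - intros l Hdist Hsym; apply distinct_cand_lines_length_le; auto.
    intros th Hth; apply Hcand, (proj1 (Forall_forall _ _) Hsym); auto.
  - intros c Hc.
    rewrite sym_line_cand_iff, mirror_preserves_adj_iff_columns, columns_iff_cond_i_ii
      by (auto; lia).
    reflexivity.
Qed.
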